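(* Let $\mathcal{H}$ be a Hilbert space and $n\in\mathbb{N}$. Suppose bounded operators on $\mathcal{H}$ satisfy Assumptions 1–4 of the context, and let $K,L_i,S_{ij}$ be defined as in the context. Then $$K+K^\dagger=-L_i^\dagger L_i,\qquad S_{il}S_{jl}^\dagger=\delta_{ij}P_0,\qquad S_{li}^\dagger S_{lj}=\delta_{ij}P_0$$ for all $i,j\in\{1,\dots,n\}$.
   Context: Repeated indices not inside parentheses are summed over $\{1,\dots,n\}$; $\dagger$ denotes the adjoint; all operators are bounded on $\mathcal{H}$. Assumption 1: for each $k\ge0$, $K^{(k)}+K^{(k)\dagger}=-L^{(k)\dagger}_iL^{(k)}_i$, $S^{(k)}_{il}S^{(k)\dagger}_{jl}=\delta_{ij}I$, $S^{(k)\dagger}_{li}S^{(k)}_{lj}=\delta_{ij}I$. Assumption 2: there are bounded operators $Y,A,B,F_i,G_i,W_{ij}$, independent of $k$, with $K^{(k)}=k^2Y+kA+B$, $L^{(k)}_i=kF_i+G_i$, $S^{(k)}_{ij}=W_{ij}$ for all $k\ge0$. Let $P_0$ be the orthogonal projection onto $\mathrm{Ker}(Y)$ and $P_1=I-P_0$. Assumption 3: there is a bounded operator $Y_1^{-1}$ on $\mathcal{H}$ with $P_1Y_1^{-1}=Y_1^{-1}P_1$, such that $YY_1^{-1}P_1ZP_0=P_1ZP_0$ for $Z\in\{A\}\cup\{F_i^\dagger W_{ij}:j=1,\dots,n\}$, and $P_0XP_1Y_1^{-1}Y=P_0XP_1$ for every $X$ among $A,B,F_i,G_i,W_{ij},G_i^\dagger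 W_{ij},F_iY_1^{-1}F_j,F_iY_1^{-1}A,F_iY_1^{-1}F_l^\dagger W_{lj},AY_1^{-1}A,AY_1^{-1}F_i,AY_1^{-1}F_l^\dagger W_{lj}$; moreover $P_0YP_1=0$, $P_0AP_0=0$, $F_iP_0=0$ and $P_0(\delta_{il}+F_iY_1^{-1}F_l^\dagger)W_{lj}P_1=0$ for all $i,j$. Define $K=P_0(B-AY_1^{-1}A)P_0$, $L_i=(G_i-F_iY_1^{-1}A)P_0$, $S_{ij}=(\delta_{il}+F_iY_1^{-1}F_l^\dagger)W_{lj}P_0$. Assumption 4: $P_1L_i=0$ and $P_1S_{ij}=0$ for all $i,j$. *)

From mathcomp Require Import all_boot all_algebra.
From mathcomp Require Import reals complex functions.
From Stdlib Require Import ClassicalEpsilon.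
Set Implicit Arguments. Unset Strict Implicit. Unset Printing Implicit Defensive.
Import GRing.Theory Num.Theory.
Local Open Scope ring_scope.

Section Hilbert.
Variable R : realType.
Variable H : lmodType R[i].
Variable ip : H -> H -> R[i].

Definition is_inner_product : Prop :=
  [/\ (forall (a : R[i]) (x1 x2 y : H), ip (a *: x1 + x2) y = a * ip x1 y + ip x2 y),
      (forall x y, ip x y = (ip y x)^*),
      (forall x, 0 <= ip x x) &
      (forall x, ip x x = 0 -> x = 0)].

Definition hnorm (x : H) : R := Num.sqrt (complex.Re (ip x x)).

Definition hcomplete : Prop :=
  forall u : nat -> H,
    (forall e : R, 0 < e -> exists N : nat, forall m n : nat,
        (N <= m)%N -> (N <= n)%N -> hnorm (u m - u n) < e) ->
    exists l : H, forall e : R, 0 < e -> exists N : nat, forall n : nat,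
        (N <= n)%N -> hnorm (u n - l) < e.

Definition is_hilbert : Prop := is_inner_product /\ hcomplete.

Definition bounded_op (T : H -> H) : Prop :=
  (forall (a : R[i]) (x y : H), T (a *: x + y) = a *: T x + T y) /\
  exists M : R, forall x, hnorm (T x) <= M * hnorm x.

Definition is_adjoint (T Td : H -> H) : Prop :=
  forall x y, ip (T x) y = ip x (Td y).

(* the adjoint T^dagger (chosen; unique in a Hilbert space) *)
Definition adj (T : H -> H) : H -> H :=
  epsilon (inhabits (fun x : H => x)) (is_adjoint T).

Definition orth_proj_onto (P : H -> H) (M : H -> Prop) : Prop :=
  [/\ bounded_op P,
      (forall x, M (P x)) &
      (forall x y, M y -> ip (x - P x) y = 0)].

Definition kerop (T : H -> H) : H -> Prop := fun x => T x = 0.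

End Hilbert.

From mathcomp Require Import all_boot all_order all_algebra.
From mathcomp Require Import reals complex functions.
From mathcomp Require Import ring.
From Stdlib Require Import ClassicalEpsilon FunctionalExtensionality.
Import Order.TTheory GRing.Theory Num.Theory.
Set Implicit Arguments. Unset Strict Implicit.
Local Open Scope ring_scope.

(* Assumption 1 holds for every k >= 0 and both of its sides are quadratic in
   k, so the coefficients vanish separately: Y + Y^† = - F_i^† F_i,
   A + A^† = - (G_i^† F_i + F_i^† G_i), B + B^† = - G_i^† G_i, and (k = 0)
   W is unitary.  Each identity is then checked on inner products <T x, z>.
   After expanding, the terms quadratic in F are rewritten with
   Y + Y^† = - F_i^† F_i, and Assumption 3 (Y Y1 is the identity on the ranges
   of P1 A P0 and P1 F^† W P0, and P0 F_i Y1 Y = P0 F_i) turns them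
   into the negatives of the cross terms; what survives is the unitarity of W
   compressed by P0.  For S S^† one first writes S_ij = P0 M_ij using
   Assumption 4, so that the adjoint of S_ij is explicit. *)

Section PointwiseOperations.
Variables (T : Type) (V : zmodType).
Implicit Types (f g : T -> V) (x : T).

Lemma addfE f g x : (f + g) x = f x + g x. Proof. by []. Qed.
Lemma oppfE f x : (- f) x = - f x. Proof. by []. Qed.
Lemma subfE f g x : (f - g) x = f x - g x. Proof. by []. Qed.
Lemma sumfE (I : Type) (r : seq I) (P : pred I) (F : I -> T -> V) x :
  (\sum_(i <- r | P i) F i) x = \sum_(i <- r | P i) F i x.
Proof. by rewrite fct_sumE. Qed.

End PointwiseOperations.

Lemma scalefE (K : pzRingType) (V : lmodType K) (T : Type) (a : K) (f : T -> V) x :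
  (a *: f) x = a *: f x.
Proof. by []. Qed.

Lemma quadratic_eq0 (K : numDomainType) (a b c : K) :
  (forall k : nat, k%:R ^+ 2 * a + k%:R * b + c = 0) -> [/\ a = 0, b = 0 & c = 0].
Proof.
move=> p0; have c0 : c = 0 by rewrite -(p0 0%N); ring.
have a0 : a = 0.
  have : 2%:R * a = (2%:R ^+ 2 * a + 2%:R * b + c)
           - 2%:R * ((1%N)%:R ^+ 2 * a + (1%N)%:R * b + c) + (0%:R ^+ 2 * a + 0%:R * b + c).
    by ring.
  by rewrite !p0 mulr0 subrr addr0 => /eqP; rewrite mulf_eq0 pnatr_eq0 => /eqP.
by split=> //; rewrite -(p0 1%N) a0 c0; ring.
Qed.

Lemma sum_delta_scale (K : pzRingType) (V : lmodType K) n (l : 'I_n) (v : 'I_n -> V) :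
  \sum_(m < n) (l == m)%:R *: v m = v l.
Proof.
rewrite (bigD1 l) //= eqxx scale1r big1 ?addr0 // => m.
by rewrite eq_sym => /negbTE ->; rewrite scale0r.
Qed.

Lemma sum_delta_mul (K : pzRingType) n (l : 'I_n) (v : 'I_n -> K) :
  \sum_(m < n) (l == m)%:R * v m = v l.
Proof. exact: (sum_delta_scale (V := K^o)). Qed.

Section InnerProduct.
Variables (R : realType) (H : lmodType R[i]) (ip : H -> H -> R[i]).
Hypothesis ip_inner : is_inner_product ip.
Implicit Types (x y z : H) (a : R[i]) (S T D : H -> H).

Lemma ipC x y : ip x y = (ip y x)^*.
Proof. by case: ip_inner. Qed.

Lemma ip0l z : ip 0 z = 0.
Proof.
case: ip_inner => linl _ _ _; have := linl 1 0 0 z.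
rewrite scaler0 addr0 mul1r => e.
by apply: (addrI (ip 0 z)); rewrite -e addr0.
Qed.

Lemma ipZl a x z : ip (a *: x) z = a * ip x z.
Proof. by case: ip_inner => linl _ _ _; rewrite -[a *: x]addr0 linl ip0l addr0. Qed.

Lemma ipDl x y z : ip (x + y) z = ip x z + ip y z.
Proof. by case: ip_inner => linl _ _ _; rewrite -[x]scale1r linl mul1r scale1r. Qed.

Lemma ipNl x z : ip (- x) z = - ip x z.
Proof. by rewrite -scaleN1r ipZl mulN1r. Qed.

Lemma ipBl x y z : ip (x - y) z = ip x z - ip y z.
Proof. by rewrite ipDl ipNl. Qed.

Lemma ip_suml (I : Type) (r : seq I) (P : pred I) (f : I -> H) z :
  ip (\sum_(i <- r | P i) f i) z = \sum_(i <- r | P i) ip (f i) z.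
Proof. exact: (big_morph (ip ^~ z) (fun x y => ipDl x y z) (ip0l z)). Qed.

Lemma ip0r z : ip z 0 = 0.
Proof. by rewrite ipC ip0l rmorph0. Qed.

Lemma ipZr a x z : ip z (a *: x) = a^* * ip z x.
Proof. by rewrite ipC ipZl rmorphM /= -ipC. Qed.

Lemma ipDr x y z : ip z (x + y) = ip z x + ip z y.
Proof. by rewrite ipC ipDl rmorphD /= -!ipC. Qed.

Lemma ipNr x z : ip z (- x) = - ip z x.
Proof. by rewrite -scaleN1r ipZr rmorphN1 mulN1r. Qed.

Lemma ipBr x y z : ip z (x - y) = ip z x - ip z y.
Proof. by rewrite ipDr ipNr. Qed.

Lemma ip_sumr (I : Type) (r : seq I) (P : pred I) (f : I -> H) z :
  ip z (\sum_(i <- r | P i) f i) = \sum_(i <- r | P i) ip z (f i).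
Proof. exact: (big_morph (ip z) (fun x y => ipDr x y z) (ip0r z)). Qed.

Lemma ip_inj x y : (forall z, ip x z = ip y z) -> x = y.
Proof.
move=> eq_xy; apply/eqP; rewrite -subr_eq0; apply/eqP.
by case: ip_inner => _ _ _; apply; rewrite ipBl eq_xy subrr.
Qed.

Lemma ip_injr x y : (forall z, ip z x = ip z y) -> x = y.
Proof. by move=> eq_xy; apply: ip_inj => z; rewrite ipC eq_xy -ipC. Qed.

Definition has_adjoint T := exists D, is_adjoint ip T D.

Lemma is_adjoint_sym T D : is_adjoint ip T D -> is_adjoint ip D T.
Proof. by move=> TD x y; rewrite ipC -TD -ipC. Qed.

Lemma adjP T : has_adjoint T -> is_adjoint ip T (adj ip T).
Proof. by move=> hT; apply: epsilon_spec. Qed.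

Lemma adj_ipl T : has_adjoint T -> forall y z, ip (adj ip T y) z = ip y (T z).
Proof. by move=> /adjP /is_adjoint_sym. Qed.

Lemma adj_unique T D : is_adjoint ip T D -> adj ip T = D.
Proof.
move=> TD; apply: functional_extensionality => y; apply: ip_injr => z.
by rewrite -TD -(adjP (ex_intro _ D TD)).
Qed.

Lemma is_adjoint_comp S S' T T' :
  is_adjoint ip S S' -> is_adjoint ip T T' -> is_adjoint ip (S \o T) (T' \o S').
Proof. by move=> SS' TT' x y /=; rewrite SS' TT'. Qed.

Lemma has_adjoint_raddfB T : has_adjoint T -> forall x y, T (x - y) = T x - T y.
Proof. by case=> D TD x y; apply: ip_inj => z; rewrite TD !ipBl !TD. Qed.

Lemma has_adjoint_raddf_sum T : has_adjoint T ->
  forall (I : Type) (r : seq I) (P : pred I) (f : I -> H),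
  T (\sum_(i <- r | P i) f i) = \sum_(i <- r | P i) T (f i).
Proof.
case=> D TD I r P f; apply: ip_inj => z.
by rewrite TD !ip_suml; apply: eq_bigr => i _; rewrite TD.
Qed.

Lemma has_adjoint_comp S T : has_adjoint S -> has_adjoint T -> has_adjoint (S \o T).
Proof. by move=> [S' SS'] [T' TT']; exists (T' \o S'); apply: is_adjoint_comp. Qed.

Lemma has_adjoint_add S T : has_adjoint S -> has_adjoint T -> has_adjoint (S + T).
Proof.
by move=> [S' SS'] [T' TT']; exists (S' + T') => x y; rewrite ipDl ipDr SS' TT'.
Qed.

Lemma has_adjoint_opp T : has_adjoint T -> has_adjoint (- T).
Proof. by move=> [T' TT']; exists (- T') => x y; rewrite ipNl ipNr TT'. Qed.

Lemma has_adjoint_scale a T : has_adjoint T -> has_adjoint (a *: T).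
Proof.
by move=> [T' TT']; exists (a^* *: T') => x y; rewrite ipZl ipZr conjCK TT'.
Qed.

Lemma has_adjoint_id : has_adjoint idfun.
Proof. by exists idfun. Qed.

Lemma has_adjoint_adj T : has_adjoint T -> has_adjoint (adj ip T).
Proof. by move=> /adjP /is_adjoint_sym TT'; exists T. Qed.

Lemma has_adjoint_sum (I : Type) (r : seq I) (P : pred I) (f : I -> H -> H) :
  (forall i, has_adjoint (f i)) -> has_adjoint (\sum_(i <- r | P i) f i).
Proof.
move=> hf; apply: (big_ind has_adjoint) => //; last exact: has_adjoint_add.
by exists 0 => x y; rewrite ip0l ip0r.
Qed.

Ltac solve_has_adjoint :=
  repeat match goal with
  | |- has_adjoint (_ + _) => apply: has_adjoint_add
  | |- has_adjoint (- _) => apply: has_adjoint_opp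
  | |- has_adjoint (_ *: _) => apply: has_adjoint_scale
  | |- has_adjoint (_ \o _) => apply: has_adjoint_comp
  | |- has_adjoint (\sum_(_ <- _ | _) _) => apply: has_adjoint_sum => ?
  | |- has_adjoint idfun => apply: has_adjoint_id
  | |- has_adjoint (adj _ _) => apply: has_adjoint_adj
  | h : forall i j, has_adjoint (?f i j) |- has_adjoint (?f _ _) => apply: h
  | h : forall i, has_adjoint (?f i) |- has_adjoint (?f _) => apply: h
  | h : has_adjoint ?f |- has_adjoint ?f => exact: h
  end.

Section OrthogonalProjection.
Variables (P : H -> H) (M : H -> Prop).
Hypothesis P_orth : orth_proj_onto ip P M.

Lemma orth_proj_id x : M x -> P x = x.
Proof.
case: P_orth => _ MP orthP Mx; apply/eqP; rewrite eq_sym -subr_eq0; apply/eqP.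
by case: ip_inner => _ _ _; apply; rewrite ipBr !orthP ?subrr.
Qed.

Lemma orth_proj_idem x : P (P x) = P x.
Proof. by case: P_orth => _ MP _; apply/orth_proj_id/MP. Qed.

Lemma orth_proj_self_adjoint : is_adjoint ip P P.
Proof.
case: P_orth => _ MP orthP x y.
have /eqP : ip (x - P x) (P y) = 0 by apply: orthP.
have /eqP : ip (y - P y) (P x) = 0 by apply: orthP.
rewrite ipBl ipBl !subr_eq0 => /eqP yPx /eqP ->.
by rewrite ipC yPx -ipC.
Qed.

End OrthogonalProjection.

Section CoefficientIdentities.
Variables (n : nat) (Y A B : H -> H) (F G : 'I_n -> H -> H).
Hypotheses (adjY : has_adjoint Y) (adjA : has_adjoint A) (adjB : has_adjoint B).
Hypotheses (adjF : forall i, has_adjoint (F i)) (adjG : forall i, has_adjoint (G i)).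
Hypothesis dissipative : forall k : R, 0 <= k ->
  let Kk := ((k ^+ 2)%:C)%C *: Y + (k%:C)%C *: A + B in
  let Lk := fun i => (k%:C)%C *: F i + G i in
  Kk + adj ip Kk = - \sum_(i < n) (adj ip (Lk i) \o Lk i).

Lemma dissipative_ip (k : R) u w : 0 <= k ->
  (k%:C)%C ^+ 2 * (ip (Y u) w + ip u (Y w) + \sum_(i < n) ip (F i u) (F i w))
  + (k%:C)%C * (ip (A u) w + ip u (A w)
                + \sum_(i < n) (ip (G i u) (F i w) + ip (F i u) (G i w)))
  + (ip (B u) w + ip u (B w) + \sum_(i < n) ip (G i u) (G i w)) = 0.
Proof.
move=> k_ge0; have /(congr1 (fun T => ip (T u) w)) := dissipative k_ge0.
have kR : ((k%:C)%C)^* = (k%:C)%C by exact: conjc_real.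
have k2R : (((k ^+ 2)%:C)%C)^* = ((k ^+ 2)%:C)%C by exact: conjc_real.
have adjK : has_adjoint (((k ^+ 2)%:C)%C *: Y + (k%:C)%C *: A + B)
  by solve_has_adjoint.
have adjL i : has_adjoint ((k%:C)%C *: F i + G i) by solve_has_adjoint.
have L_ip i : ip ((adj ip ((k%:C)%C *: F i + G i) \o ((k%:C)%C *: F i + G i)) u) w
    = (k%:C)%C ^+ 2 * ip (F i u) (F i w)
      + (k%:C)%C * (ip (G i u) (F i w) + ip (F i u) (G i w)) + ip (G i u) (G i w).
  by rewrite /= adj_ipl // !addfE !scalefE !ipDl !ipDr !ipZl !ipZr kR; ring.
rewrite /= addfE ipDl adj_ipl // oppfE sumfE ipNl ip_suml.
rewrite (eq_bigr _ (fun i _ => L_ip i)) big_split big_split /= -!mulr_sumr.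
rewrite !addfE !scalefE !ipDl !ipDr !ipZl !ipZr kR k2R rmorphXn /=.
move=> /eqP; rewrite -subr_eq0 => /eqP E; rewrite -[RHS]E; ring.
Qed.

Lemma dissipative_coefs u w :
  [/\ ip (Y u) w + ip u (Y w) + \sum_(i < n) ip (F i u) (F i w) = 0,
      ip (A u) w + ip u (A w)
        + \sum_(i < n) (ip (G i u) (F i w) + ip (F i u) (G i w)) = 0 &
      ip (B u) w + ip u (B w) + \sum_(i < n) ip (G i u) (G i w) = 0].
Proof.
apply: quadratic_eq0 => k.
by have := dissipative_ip u w (ler0n _ k); rewrite rmorph_nat.
Qed.

Lemma sum_ip_FF u w :
  \sum_(i < n) ip (F i u) (F i w) = - ip (Y u) w - ip u (Y w).
Proof. by case: (dissipative_coefs u w) => /eqP; rewrite addrC addr_eq0 opprD => /eqP. Qed.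

Lemma sum_ip_GF_FG u w :
  \sum_(i < n) (ip (G i u) (F i w) + ip (F i u) (G i w)) = - ip (A u) w - ip u (A w).
Proof. by case: (dissipative_coefs u w) => _ /eqP; rewrite addrC addr_eq0 opprD => /eqP. Qed.

Lemma sum_ip_GG u w :
  \sum_(i < n) ip (G i u) (G i w) = - ip (B u) w - ip u (B w).
Proof. by case: (dissipative_coefs u w) => _ _ /eqP; rewrite addrC addr_eq0 opprD => /eqP. Qed.

Section Reduction.
Variables (W : 'I_n -> 'I_n -> H -> H) (P0 Y1 : H -> H).
Hypotheses (adjW : forall i j, has_adjoint (W i j)) (adjY1 : has_adjoint Y1).
Hypothesis P0_proj : orth_proj_onto ip P0 (kerop Y).
Hypothesis W_coisometry :
  forall i j, \sum_(l < n) (W i l \o adj ip (W j l)) = (i == j)%:R *: idfun.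
Hypothesis W_isometry :
  forall i j, \sum_(l < n) (adj ip (W l i) \o W l j) = (i == j)%:R *: idfun.
Hypothesis F_P0 : forall i, F i \o P0 = 0.
Hypothesis P0_A_P0 : P0 \o A \o P0 = 0.
Hypothesis Y_Y1_A : Y \o Y1 \o (idfun - P0) \o A \o P0 = (idfun - P0) \o A \o P0.

Definition FdW j := \sum_(l < n) (adj ip (F l) \o W l j).

Hypothesis Y_Y1_FdW : forall j,
  Y \o Y1 \o (idfun - P0) \o FdW j \o P0 = (idfun - P0) \o FdW j \o P0.
Hypothesis P0_F_Y1_Y : forall i,
  P0 \o F i \o (idfun - P0) \o Y1 \o Y = P0 \o F i \o (idfun - P0).

Definition redK := P0 \o (B - (A \o Y1 \o A)) \o P0.
Definition redL i := (G i - (F i \o Y1 \o A)) \o P0.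
Definition redM i j :=
  \sum_(l < n) (((i == l)%:R *: idfun + (F i \o Y1 \o adj ip (F l))) \o W l j).
Definition redS i j := redM i j \o P0.

Hypothesis P0_M_P1 : forall i j, P0 \o redM i j \o (idfun - P0) = 0.
Hypothesis P1_S : forall i j, (idfun - P0) \o redS i j = 0.

Let P0_adj : is_adjoint ip P0 P0 := orth_proj_self_adjoint P0_proj.
Let adjP0 : has_adjoint P0 := ex_intro _ P0 P0_adj.

Lemma ip_P0 x z : ip (P0 x) (P0 z) = ip (P0 x) z.
Proof. by rewrite -P0_adj (orth_proj_idem P0_proj). Qed.

Lemma F_P0_eq0 i x : F i (P0 x) = 0.
Proof. exact: (congr1 (fun T => T x) (F_P0 i)). Qed.

Lemma P0_adjF i y : P0 (adj ip (F i) y) = 0.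
Proof. by apply: ip_inj => z; rewrite P0_adj adj_ipl // F_P0_eq0 ip0r ip0l. Qed.

Lemma Y_Y1_A_P0 x : Y (Y1 (A (P0 x))) = A (P0 x).
Proof.
have P0AP0 : P0 (A (P0 x)) = 0 by exact: (congr1 (fun T => T x) P0_A_P0).
by have := congr1 (fun T => T x) Y_Y1_A; rewrite /= !subfE /= P0AP0 !subr0.
Qed.

Lemma redK_dissipative :
  redK + adj ip redK = - \sum_(i < n) (adj ip (redL i) \o redL i).
Proof.
apply: functional_extensionality => x; apply: ip_inj => z.
have adjK : has_adjoint redK by rewrite /redK; solve_has_adjoint.
have adjL i : has_adjoint (redL i) by rewrite /redL; solve_has_adjoint.
have GF_P0 w : \sum_(i < n) ip (G i (P0 x)) (F i w) = - ip (A (P0 x)) w - ip (P0 x) (A w).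
  by rewrite -sum_ip_GF_FG; apply: eq_bigr => i _; rewrite F_P0_eq0 ip0l addr0.
have FG_P0 u : \sum_(i < n) ip (F i u) (G i (P0 z)) = - ip (A u) (P0 z) - ip u (A (P0 z)).
  by rewrite -sum_ip_GF_FG; apply: eq_bigr => i _; rewrite F_P0_eq0 ip0r add0r.
have L_ip i : ip ((adj ip (redL i) \o redL i) x) z =
    ip (G i (P0 x)) (G i (P0 z)) - ip (G i (P0 x)) (F i (Y1 (A (P0 z))))
    - ip (F i (Y1 (A (P0 x)))) (G i (P0 z)) + ip (F i (Y1 (A (P0 x)))) (F i (Y1 (A (P0 z)))).
  by rewrite /= adj_ipl // /redL /= !subfE /= !ipBl !ipBr; ring.
rewrite addfE ipDl adj_ipl // oppfE sumfE ipNl ip_suml (eq_bigr _ (fun i _ => L_ip i)).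
rewrite big_split !sumrB /= sum_ip_GG GF_P0 FG_P0 sum_ip_FF !Y_Y1_A_P0.
by rewrite /redK /= !subfE /= P0_adj -(P0_adj x) !ipBl !ipBr; ring.
Qed.

Lemma redS_expand l j x : redS l j x = W l j (P0 x) + F l (Y1 (FdW j (P0 x))).
Proof.
rewrite /redS /redM /= sumfE.
under eq_bigr => m _ do rewrite /= addfE scalefE /=.
rewrite big_split /= sum_delta_scale /FdW sumfE.
by rewrite -has_adjoint_raddf_sum // -has_adjoint_raddf_sum.
Qed.

Lemma Y_Y1_FdW_P0 j x : Y (Y1 (FdW j (P0 x))) = FdW j (P0 x).
Proof.
have P0FdW : P0 (FdW j (P0 x)) = 0.
  by rewrite /FdW sumfE has_adjoint_raddf_sum // big1 // => m _; apply: P0_adjF.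
by have := congr1 (fun T => T x) (Y_Y1_FdW j); rewrite /= !subfE /= P0FdW !subr0.
Qed.

Lemma redS_isometry i j :
  \sum_(l < n) (adj ip (redS l i) \o redS l j) = (i == j)%:R *: P0.
Proof.
apply: functional_extensionality => x; apply: ip_inj => z.
have adjS l : has_adjoint (redS l i) by rewrite /redS /redM; solve_has_adjoint.
pose u := Y1 (FdW j (P0 x)); pose u' := Y1 (FdW i (P0 z)).
have S_ip l : ip ((adj ip (redS l i) \o redS l j) x) z =
    ip (adj ip (W l i) (W l j (P0 x))) (P0 z) + ip (adj ip (F l) (W l j (P0 x))) u'
    + ip u (adj ip (F l) (W l i (P0 z))) + ip (F l u) (F l u').
  rewrite /= adj_ipl // !redS_expand -/u -/u' !ipDl !ipDr adj_ipl // adj_ipl //.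
  by rewrite -(adjP (adjF l) u); ring.
rewrite sumfE ip_suml scalefE ipZl (eq_bigr _ (fun l _ => S_ip l)) !big_split /=.
rewrite -!ip_suml -ip_sumr sum_ip_FF /u /u' !Y_Y1_FdW_P0 /FdW !sumfE /=.
have := congr1 (fun T => T (P0 x)) (W_isometry i j); rewrite sumfE /= => ->.
by rewrite scalefE ipZl ip_P0; ring.
Qed.

Lemma P0_F_Y1_Y_apply i w : P0 (F i (Y1 (Y w))) = P0 (F i w).
Proof.
have := congr1 (fun T => T w) (P0_F_Y1_Y i); rewrite /= !subfE /=.
by rewrite !(has_adjoint_raddfB (adjF i)) !F_P0_eq0 !subr0.
Qed.

Lemma redS_P0_M i l : redS i l = P0 \o redM i l.
Proof.
have adjM : has_adjoint (redM i l) by rewrite /redM; solve_has_adjoint.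
apply: functional_extensionality => y.
have /eqP : ((idfun - P0) \o redS i l) y = 0 by rewrite P1_S.
rewrite /= subfE /= subr_eq0 => /eqP ->.
have /eqP : (P0 \o redM i l \o (idfun - P0)) y = 0 by rewrite P0_M_P1.
rewrite /= subfE /= (has_adjoint_raddfB adjM) (has_adjoint_raddfB adjP0).
by rewrite subr_eq0 => /eqP ->.
Qed.

Definition redM_adj i l w :=
  \sum_(m < n) adj ip (W m l) ((i == m)%:R *: w + F m (adj ip Y1 (adj ip (F i) w))).

Lemma redM_adjoint i l : is_adjoint ip (redM i l) (redM_adj i l).
Proof.
move=> y z; rewrite /redM /redM_adj sumfE ip_suml ip_sumr; apply: eq_bigr => m _.
rewrite /= -(adjP (adjW m l)) addfE scalefE /= !ipDl !ipDr ipZl ipZr rmorph_nat.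
by rewrite (adjP (adjF i)) (adjP adjY1) adj_ipl.
Qed.

Lemma adj_redS i l : adj ip (redS i l) = redM_adj i l \o P0.
Proof.
by rewrite redS_P0_M; apply: adj_unique; apply: is_adjoint_comp (redM_adjoint i l).
Qed.

Lemma ip_W_coisometry (a b : 'I_n -> H) :
  \sum_(l < n) ip (\sum_(m < n) adj ip (W m l) (a m)) (\sum_(m < n) adj ip (W m l) (b m))
  = \sum_(m < n) ip (a m) (b m).
Proof.
have WW m : \sum_(l < n) W m l (\sum_(k < n) adj ip (W k l) (b k)) = b m.
  under eq_bigr => l _ do rewrite (has_adjoint_raddf_sum (adjW m l)).
  rewrite exchange_big /= -[RHS](sum_delta_scale m b); apply: eq_bigr => k _.
  by have := congr1 (fun T => T (b k)) (W_coisometry m k); rewrite sumfE.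
under eq_bigr => l _ do rewrite ip_suml.
rewrite exchange_big /=; apply: eq_bigr => m _.
by under eq_bigr => l _ do rewrite adj_ipl //; rewrite -ip_sumr WW.
Qed.

Lemma redS_coisometry i j :
  \sum_(l < n) (redS i l \o adj ip (redS j l)) = (i == j)%:R *: P0.
Proof.
apply: functional_extensionality => x; apply: ip_inj => z.
have adjS l : has_adjoint (redS i l) by rewrite /redS /redM; solve_has_adjoint.
pose al := adj ip Y1 (adj ip (F j) (P0 x)); pose be := adj ip Y1 (adj ip (F i) (P0 z)).
have Y_al : ip (Y al) be = ip (F i al) (P0 z).
  by rewrite -(adjP adjY1) -(adjP (adjF i)) -P0_adj P0_F_Y1_Y_apply P0_adj.
have Y_be : ip al (Y be) = ip (P0 x) (F j be).
  by rewrite adj_ipl // adj_ipl // P0_adj P0_F_Y1_Y_apply -P0_adj.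
rewrite sumfE ip_suml scalefE ipZl.
under eq_bigr => l _ do rewrite /= (adjP (adjS l)) !adj_redS /=.
rewrite ip_W_coisometry (eq_bigr (fun m => (j == m)%:R * ((i == m)%:R * ip (P0 x) (P0 z)
    + ip (P0 x) (F m be)) + (i == m)%:R * ip (F m al) (P0 z) + ip (F m al) (F m be))).
  by rewrite !big_split /= !sum_delta_mul sum_ip_FF Y_al Y_be ip_P0; ring.
by move=> m _; rewrite !ipDl !ipDr !ipZl !ipZr !rmorph_nat; ring.
Qed.

End Reduction.

End CoefficientIdentities.
End InnerProduct.

Theorem lemma2p5 (R : realType) (H : lmodType R[i]) (ip : H -> H -> R[i])
  (n : nat)
  (Y A B : H -> H) (F G : 'I_n -> H -> H) (W : 'I_n -> 'I_n -> H -> H)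
  (P0 Y1 : H -> H) :
  (* H is a Hilbert space; every bounded operator on H has an adjoint *)
  is_hilbert ip ->
  (forall T, bounded_op ip T -> exists Td, is_adjoint ip T Td) ->
  (* all the given operators are bounded *)
  bounded_op ip Y -> bounded_op ip A -> bounded_op ip B ->
  (forall i, bounded_op ip (F i)) -> (forall i, bounded_op ip (G i)) ->
  (forall i j, bounded_op ip (W i j)) -> bounded_op ip Y1 ->
  (* P0 is the orthogonal projection onto Ker Y *)
  orth_proj_onto ip P0 (kerop Y) ->
  let P1 := idfun - P0 in
  (* Assumptions 1 and 2: K^(k) = k^2 Y + k A + B, L^(k)_i = k F_i + G_i, S^(k) = W *)
  (forall k : R, 0 <= k ->
     let Kk := ((k ^+ 2)%:C)%C *: Y + (k%:C)%C *: A + B in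
     let Lk := fun i => (k%:C)%C *: F i + G i in
     [/\ Kk + adj ip Kk = - \sum_(i < n) (adj ip (Lk i) \o Lk i),
         (forall i j, \sum_(l < n) (W i l \o adj ip (W j l))
                      = (i == j)%:R *: idfun) &
         (forall i j, \sum_(l < n) (adj ip (W l i) \o W l j)
                      = (i == j)%:R *: idfun)]) ->
  (* Assumption 3 *)
  (P1 \o Y1 = Y1 \o P1) ->
  (Y \o Y1 \o P1 \o A \o P0 = P1 \o A \o P0) ->
  (forall j, Y \o Y1 \o P1 \o (\sum_(i < n) (adj ip (F i) \o W i j)) \o P0
             = P1 \o (\sum_(i < n) (adj ip (F i) \o W i j)) \o P0) ->
  (forall X : H -> H,
     (X = A \/ X = B \/ (exists i, X = F i) \/ (exists i, X = G i) \/
      (exists i j, X = W i j) \/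
      (exists j, X = \sum_(i < n) (adj ip (G i) \o W i j)) \/
      (exists i j, X = F i \o Y1 \o F j) \/
      (exists i, X = F i \o Y1 \o A) \/
      (exists i j, X = \sum_(l < n) (F i \o Y1 \o adj ip (F l) \o W l j)) \/
      X = A \o Y1 \o A \/
      (exists i, X = A \o Y1 \o F i) \/
      (exists j, X = \sum_(l < n) (A \o Y1 \o adj ip (F l) \o W l j))) ->
     P0 \o X \o P1 \o Y1 \o Y = P0 \o X \o P1) ->
  P0 \o Y \o P1 = 0 ->
  P0 \o A \o P0 = 0 ->
  (forall i, F i \o P0 = 0) ->
  (forall i j, P0 \o (\sum_(l < n) (((i == l)%:R *: idfun + (F i \o Y1 \o adj ip (F l)))
                                   \o W l j)) \o P1 = 0) ->
  (* definitions of K, L_i, S_ij *)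
  let K := P0 \o (B - (A \o Y1 \o A)) \o P0 in
  let L := fun i => (G i - (F i \o Y1 \o A)) \o P0 in
  let S := fun i j => \sum_(l < n) (((i == l)%:R *: idfun + (F i \o Y1 \o adj ip (F l)))
                                   \o W l j) \o P0 in
  (* Assumption 4 *)
  (forall i, P1 \o L i = 0) ->
  (forall i j, P1 \o S i j = 0) ->
  (* conclusion *)
  [/\ K + adj ip K = - \sum_(i < n) (adj ip (L i) \o L i),
      (forall i j, \sum_(l < n) (S i l \o adj ip (S j l)) = (i == j)%:R *: P0) &
      (forall i j, \sum_(l < n) (adj ip (S l i) \o S l j) = (i == j)%:R *: P0)].
Proof.
move=> [ip_inner _] adj_bounded bY bA bB bF bG bW bY1 P0_proj P1 dissipative
  _ Y_Y1_A Y_Y1_FdW P0_X_P1 _ P0_A_P0 F_P0 P0_M_P1 K L S _ P1_S.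
have adjY := adj_bounded _ bY; have adjA := adj_bounded _ bA.
have adjB := adj_bounded _ bB; have adjY1 := adj_bounded _ bY1.
have adjF i := adj_bounded _ (bF i); have adjG i := adj_bounded _ (bG i).
have adjW i j := adj_bounded _ (bW i j).
have dissipative_k k (k_ge0 : 0 <= k) := let: And3 Kk _ _ := dissipative k k_ge0 in Kk.
have [_ W_coisometry W_isometry] := dissipative 0 (lexx 0).
have P0_F_Y1_Y i : P0 \o F i \o P1 \o Y1 \o Y = P0 \o F i \o P1.
  by apply: P0_X_P1; do 2 right; left; exists i.
split.
- exact (redK_dissipative ip_inner adjY adjA adjB adjF adjG dissipative_k
    adjY1 P0_proj F_P0 P0_A_P0 Y_Y1_A).
- exact (redS_coisometry ip_inner adjY adjA adjB adjF adjG dissipative_k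
    adjW adjY1 P0_proj W_coisometry F_P0 P0_F_Y1_Y P0_M_P1 P1_S).
- exact (redS_isometry ip_inner adjY adjA adjB adjF adjG dissipative_k
    adjW adjY1 P0_proj W_isometry F_P0 Y_Y1_FdW).
Qed.
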